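(* Let $\mathscr X$ be a compact subset of $\mathbb R^d$ and $\|\cdot\|$ a norm on $\mathbb R^d$. Let $a\in(0,1]$ and $\alpha_1,\alpha_2,\ldots\in[a,1]$. Let $\mathbf x_1\in\mathscr X$ be arbitrary and, for $n=1,2,\ldots$, let $\mathbf x_{n+1}$ be any point of $\mathscr X$ such that $\min_{1\le i\le n}\|\mathbf x_{n+1}-\mathbf x_i\|\ge\alpha_n\,\mathsf{CR}(\mathbf X_n)$, where $\mathbf X_n=\{\mathbf x_1,\ldots,\mathbf x_n\}$ (relaxed greedy packing). Then for all $n\ge2$, $$\mathsf{CR}(\mathbf X_n)\le\frac2a\,\mathsf{CR}_n^*,\qquad\mathsf{SR}(\mathbf X_n)\ge\frac a2\,\mathsf{SR}_n^*,\qquad\mathsf{MR}(\mathbf X_n)\le\frac2a.$$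
   Context: For a design $\mathbf X_n$ of $n$ points in $\mathscr X$: fill distance $\mathsf{CR}(\mathbf X_n)=\sup_{\mathbf x\in\mathscr X}\min_{\mathbf x_i\in\mathbf X_n}\|\mathbf x-\mathbf x_i\|$; separation radius $\mathsf{SR}(\mathbf X_n)=\tfrac12\min_{\mathbf x_i\ne\mathbf x_j\in\mathbf X_n}\|\mathbf x_i-\mathbf x_j\|$; mesh-ratio $\mathsf{MR}(\mathbf X_n)=\mathsf{CR}(\mathbf X_n)/\mathsf{SR}(\mathbf X_n)$. $\mathsf{CR}_n^*$ is the minimum of $\mathsf{CR}$ and $\mathsf{SR}_n^*$ the maximum of $\mathsf{SR}$ over all $n$-point designs of distinct points in $\mathscr X$. *)

From HB Require Import structures.
From mathcomp Require Import all_boot all_order all_algebra.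
From mathcomp Require Import all_classical all_reals all_analysis.
Set Implicit Arguments. Unset Strict Implicit. Unset Printing Implicit Defensive.
Import Order.TTheory GRing.Theory Num.Theory.
Import numFieldNormedType.Exports.
Local Open Scope classical_set_scope.
Local Open Scope ring_scope.

Section Defs.
Variables (R : realType) (d : nat).
Local Notation V := 'rV[R]_d.

Definition is_norm (N : V -> R) : Prop :=
  [/\ forall u v, N (u + v) <= N u + N v,
      forall (k : R) u, N (k *: u) = `|k| * N u
    & forall u, N u = 0 -> u = 0].

Definition mindist (N : V -> R) n (p : 'I_n -> V) (y : V) : R :=
  inf [set N (y - p i) | i in [set: 'I_n]].

Definition CR (N : V -> R) (X : set V) n (p : 'I_n -> V) : R :=
  sup [set mindist N p y | y in X].

Definition SR (N : V -> R) n (p : 'I_n -> V) : R :=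
  2^-1 * inf [set N (p ij.1 - p ij.2) | ij in [set ij : 'I_n * 'I_n | p ij.1 <> p ij.2]].

Definition MR (N : V -> R) (X : set V) n (p : 'I_n -> V) : R :=
  CR N X p / SR N p.

Definition design (X : set V) n (p : 'I_n -> V) : Prop :=
  injective p /\ forall i, X (p i).

Definition CRstar (N : V -> R) (X : set V) n : R :=
  inf [set CR N X p | p in [set p : 'I_n -> V | design X p]].
Definition SRstar (N : V -> R) (X : set V) n : R :=
  sup [set SR N p | p in [set p : 'I_n -> V | design X p]].

(* the first n points x_0, ..., x_{n-1} of a sequence (paper: x_1..x_n) *)
Definition firstpts (x : nat -> V) n : 'I_n -> V := fun i => x (nat_of_ord i).
End Defs.
Arguments firstpts [R d] x n _.

From HB Require Import structures.
From mathcomp Require Import all_boot all_order all_algebra.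
From mathcomp Require Import all_classical all_reals all_analysis.
From mathcomp Require Import lra zify ring.
Set Implicit Arguments. Unset Strict Implicit. Unset Printing Implicit Defensive.
Import Order.TTheory GRing.Theory Num.Theory.
Import numFieldNormedType.Exports.
Local Open Scope classical_set_scope.
Local Open Scope ring_scope.

(* Let rho_n be the fill distance of the first n greedy points.  It is
   nonincreasing in n, so each greedy point x_j with j <= n lies at distance
   at least a rho_j >= a rho_n from its predecessors.  By pigeonhole, two of
   x_0, ..., x_n share a nearest point in any n-point design Y, whence
   a rho_n <= 2 CR(Y).  Likewise two points of any (m+1)-point design share a
   nearest point among x_0, ..., x_(m-1), whence SR(Y) <= rho_m; and the
   greedy points themselves satisfy SR >= a rho_m / 2 >= a rho_(m+1) / 2,
   which also bounds the mesh ratio. *)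

Lemma inf_ord_attained {R : realType} {m} (f : 'I_m -> R) (i0 : 'I_m) :
  exists k, inf [set f i | i in [set: 'I_m]] = f k /\ forall i, f k <= f i.
Proof.
have [k _ kmin] := @arg_minP _ R _ i0 xpredT f erefl.
exists k; split=> [|i]; last exact: kmin.
apply/le_anti/andP; split.
  by apply: ge_inf; [exists (f k) => _ [i _ <-]; exact: kmin | exists k].
by apply: lb_le_inf; [exists (f k), k | move=> _ [i _ <-]; exact: kmin].
Qed.

Lemma le_sup_image {R : realType} {T} (A : set T) (f g : T -> R) :
  (forall z, A z -> f z <= g z) -> has_ubound (g @` A) ->
  sup (f @` A) <= sup (g @` A).
Proof.
move=> fg [M gM]; have [[z Az] | A0] := pselect (A !=set0); last first.
  have -> : A = set0 by apply/seteqP; split=> // z Az; apply: A0; exists z.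
  by rewrite !image_set0.
apply: ge_sup; first by exists (f z), z.
move=> _ [y Ay <-]; apply: le_trans (fg y Ay) _.
by apply: ub_le_sup; [exists M | exists y].
Qed.

Lemma ler_halfM_inv {R : realFieldType} (a u v : R) :
  0 < a -> a / 2 * u <= v -> u <= 2 / a * v.
Proof.
move=> a_gt0 le_uv; have -> : u = 2 / a * (a / 2 * u) by field; rewrite gt_eqF.
by apply: ler_wpM2l le_uv; rewrite divr_ge0 // ltW.
Qed.

Section Norm.
Variables (R : realType) (d : nat) (N : 'rV[R]_d -> R).
Hypothesis normN : is_norm N.

Lemma is_norm0 : N 0 = 0.
Proof. by case: normN => _ hZ _; rewrite -(scale0r 0) hZ normr0 mul0r. Qed.

Lemma is_normN u : N (- u) = N u.
Proof. by case: normN => _ hZ _; rewrite -scaleN1r hZ normrN1 mul1r. Qed.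

Lemma is_normB u v : N (u - v) <= N u + N v.
Proof. by case: normN => hT _ _; rewrite -(is_normN v) hT. Qed.

Lemma is_norm_ge0 u : 0 <= N u.
Proof. by have := is_normB u u; rewrite subrr is_norm0; lra. Qed.

Lemma is_norm_sum I (r : seq I) (P : pred I) (F : I -> 'rV[R]_d) :
  N (\sum_(i <- r | P i) F i) <= \sum_(i <- r | P i) N (F i).
Proof.
case: normN => hT _ _; apply: (big_ind2 (fun u y => N u <= y)) => //.
  by rewrite is_norm0.
by move=> u1 u2 y1 y2 h1 h2; apply: le_trans (hT _ _) (lerD h1 h2).
Qed.

Lemma is_norm_dominated : exists C, forall u, N u <= C * `|u|.
Proof.
case: (normN) => _ hZ _.
exists (\sum_(i < 1) \sum_(j < d) N (delta_mx i j)) => u.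
rewrite {1}(matrix_sum_delta u) mulr_suml.
apply: le_trans (is_norm_sum _ _ _) _; apply: ler_sum => i _.
rewrite mulr_suml; apply: le_trans (is_norm_sum _ _ _) _; apply: ler_sum => j _.
rewrite hZ mulrC; apply: ler_wpM2l; first exact: is_norm_ge0.
rewrite -[`|u|]/(mx_norm u) mx_normrE.
exact: (le_bigmax _ (fun ij : 'I_1 * 'I_d => `|u ij.1 ij.2|) (i, j)).
Qed.

Lemma compact_is_norm_bounded (X : set 'rV[R]_d) :
  compact X -> exists M, forall y, X y -> N y <= M.
Proof.
move=> Xc; have [C NC] := is_norm_dominated.
have [M [_ XM]] := compact_bounded Xc.
have /XM XM1 : M < `|M| + 1 by have := ler_norm M; lra.
exists (`|C| * (`|M| + 1)) => y /XM1 /= le_y.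
apply: le_trans (NC y) _; apply: le_trans (ler_wpM2r (normr_ge0 _) (ler_norm C)) _.
by apply: ler_wpM2l.
Qed.

End Norm.

Section Designs.
Variables (R : realType) (d : nat) (N : 'rV[R]_d -> R) (X : set 'rV[R]_d).
Hypotheses (normN : is_norm N) (X_bounded : exists M, forall y, X y -> N y <= M).

Lemma mindist_attained m (p : 'I_m -> 'rV[R]_d) y (i0 : 'I_m) :
  exists k, mindist N p y = N (y - p k).
Proof.
by have [k [attained _]] := inf_ord_attained (fun i => N (y - p i)) i0; exists k.
Qed.

Lemma mindist_le m (p : 'I_m -> 'rV[R]_d) y i : mindist N p y <= N (y - p i).
Proof.
rewrite /mindist; have [k [-> kmin]] := inf_ord_attained (fun i => N (y - p i)) i.
exact: kmin.
Qed.

Lemma mindist_ge0 m (p : 'I_m -> 'rV[R]_d) y : 0 <= mindist N p y.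
Proof.
case: m p => [|m] p; last first.
  by have [k ->] := mindist_attained p y ord0; exact: is_norm_ge0.
rewrite /mindist (_ : [set _ | _ in _] = set0) ?inf0 //.
by apply/seteqP; split=> // z [[i i_lt0] _ _].
Qed.

Lemma CR_ge0 m (p : 'I_m -> 'rV[R]_d) : 0 <= CR N X p.
Proof.
rewrite /CR; set S := [set _ | _ in _].
have [[[z [y Xy _]] S_ub] | S_nosup] := pselect (has_sup S); last by rewrite sup_out.
apply: le_trans (mindist_ge0 p y) _.
exact: ub_le_sup S_ub _ (ex_intro2 _ _ y Xy erefl).
Qed.

Lemma CR_has_ubound m (p : 'I_m -> 'rV[R]_d) (i0 : 'I_m) :
  has_ubound [set mindist N p y | y in X].
Proof.
have [M XM] := X_bounded; exists (M + N (p i0)) => _ [y Xy <-].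
apply: le_trans (mindist_le p y i0) _; apply: le_trans (is_normB normN _ _) _.
by rewrite lerD2r XM.
Qed.

Lemma mindist_le_CR m (p : 'I_m -> 'rV[R]_d) (i0 : 'I_m) y :
  X y -> mindist N p y <= CR N X p.
Proof. by move=> Xy; apply: ub_le_sup; [exact: CR_has_ubound i0 | exists y]. Qed.

Lemma CR_le_of_subset k m (p : 'I_k -> 'rV[R]_d) (q : 'I_m -> 'rV[R]_d)
    (i0 : 'I_m) :
  (forall i, exists j, p j = q i) -> CR N X p <= CR N X q.
Proof.
move=> qp; apply: le_sup_image (CR_has_ubound q i0) => y _.
have [i ->] := mindist_attained q y i0; have [j <-] := qp i; exact: mindist_le.
Qed.

(* Two of the k points share a nearest point of q. *)
Lemma pigeonhole_CR k m (p : 'I_k -> 'rV[R]_d) (q : 'I_m -> 'rV[R]_d)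
    (i0 : 'I_m) :
  (m < k)%N -> (forall i, X (p i)) ->
  exists i j, i != j /\ N (p i - p j) <= 2 * CR N X q.
Proof.
move=> mk pX.
have /choice [g nearest] : forall i, exists l, mindist N q (p i) = N (p i - q l).
  by move=> i; exact: mindist_attained.
have /injectivePn [i [j ij gij]] : ~~ injectiveb g.
  by apply/negP => /injectiveP /leq_card; rewrite !card_ord leqNgt mk.
exists i, j; split=> //.
have -> : p i - p j = (p i - q (g i)) - (p j - q (g i)) by rewrite opprB addrA subrK.
apply: le_trans (is_normB normN _ _) _; rewrite mulr2n mulrDl mul1r.
by apply: lerD; [rewrite -nearest | rewrite gij -nearest]; exact: mindist_le_CR.
Qed.

Lemma SR_le_dist n (p : 'I_n -> 'rV[R]_d) i j :
  p i <> p j -> 2 * SR N p <= N (p i - p j).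
Proof.
move=> pij; rewrite /SR mulrA divff ?pnatr_eq0 // mul1r.
apply: ge_inf; last by exists (i, j).
by exists 0 => _ [ij _ <-]; exact: is_norm_ge0.
Qed.

Lemma SR_ge_of_separated n (p : 'I_n -> 'rV[R]_d) c : (1 < n)%N ->
  (forall i j, i != j -> c <= N (p i - p j)) -> c / 2 <= SR N p.
Proof.
move=> n_gt1 sep; rewrite /SR [c / 2]mulrC ler_pM2l ?invr_gt0 //.
set S := [set _ | _ in _]; have [S_ne | S0] := pselect (S !=set0).
  apply: lb_le_inf => // _ [[i j] /= pij <-]; apply: sep.
  by apply/eqP => ij; apply: pij; rewrite ij.
have -> : S = set0 by apply/seteqP; split=> // z Sz; apply: S0; exists z.
pose i0 := Ordinal (ltnW n_gt1); pose i1 := Ordinal n_gt1.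
have [p01 | p01] := pselect (p i0 = p i1).
  by rewrite inf0 -(is_norm0 normN) -(subrr (p i0)) {2}p01; exact: sep.
by exfalso; apply: S0; exists (N (p i0 - p i1)), (i0, i1).
Qed.

Lemma SR_design_le_CR m (Y : 'I_m.+1 -> 'rV[R]_d) (q : 'I_m -> 'rV[R]_d)
    (i0 : 'I_m) :
  design X Y -> SR N Y <= CR N X q.
Proof.
case=> Y_inj YX; have [i [j [ij le_ij]]] := pigeonhole_CR q i0 (ltnSn m) YX.
rewrite -(ler_pM2l (_ : 0 < 2)) //; apply: le_trans le_ij.
by apply: SR_le_dist => /Y_inj /eqP; apply/negP.
Qed.

End Designs.

Section RelaxedGreedy.
Variables (R : realType) (d : nat) (N : 'rV[R]_d -> R) (X : set 'rV[R]_d).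
Variables (a : R) (x : nat -> 'rV[R]_d).
Hypotheses (normN : is_norm N) (X_bounded : exists M, forall y, X y -> N y <= M).
Hypotheses (a_ge0 : 0 <= a) (xX : forall k, X (x k)).
Hypothesis greedy : forall n, (0 < n)%N ->
  a * CR N X (firstpts x n) <= mindist N (firstpts x n) (x n).

Local Notation rho n := (CR N X (firstpts x n)).

Lemma greedy_CR_le m k : (0 < m)%N -> (m <= k)%N -> rho k <= rho m.
Proof.
move=> m_gt0 mk; apply: (CR_le_of_subset normN X_bounded (Ordinal m_gt0)) => i.
by exists (widen_ord mk i).
Qed.

Lemma greedy_dist_ge n i j : (i < j)%N -> (j <= n)%N -> a * rho n <= N (x j - x i).
Proof.
move=> ij jn; have j_gt0 : (0 < j)%N by lia.
apply: le_trans (mindist_le _ (firstpts x j) (x j) (Ordinal ij)).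
apply: le_trans (greedy j_gt0); exact: ler_wpM2l (greedy_CR_le j_gt0 jn).
Qed.

Lemma greedy_separated n i j : i != j -> (i <= n)%N -> (j <= n)%N ->
  a * rho n <= N (x i - x j).
Proof.
case: (ltngtP i j) => // [ij|ji] _ i_le j_le; last exact: greedy_dist_ge.
by rewrite -opprB is_normN //; exact: greedy_dist_ge.
Qed.

Lemma greedy_CR_le_design n (Y : 'I_n -> 'rV[R]_d) (i0 : 'I_n) :
  a * rho n <= 2 * CR N X Y.
Proof.
have [i [j [ij le_ij]]] :=
  pigeonhole_CR (p := firstpts x n.+1) normN X_bounded Y i0 (ltnSn n) (fun i => xX i).
apply: le_trans le_ij; apply: greedy_separated; first exact: ij.
all: by rewrite -ltnS ltn_ord.
Qed.

Lemma greedy_SR_ge m : (0 < m)%N -> a / 2 * rho m <= SR N (firstpts x m.+1).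
Proof.
move=> m_gt0; rewrite mulrAC; apply: SR_ge_of_separated => // i j ij.
apply: greedy_separated; first exact: ij.
all: by rewrite -ltnS ltn_ord.
Qed.

End RelaxedGreedy.

(* Paper's x_{k} is x (k-1) here; X_n = firstpts x n = {x 0, ..., x (n-1)}. *)
Theorem theorem5 (R : realType) (d : nat) (X : set 'rV[R]_d)
    (N : 'rV[R]_d -> R) (a : R) (alpha : nat -> R) (x : nat -> 'rV[R]_d) :
  compact X ->
  is_norm N ->
  0 < a <= 1 ->
  (forall n, (0 < n)%N -> a <= alpha n <= 1) ->
  (forall k, X (x k)) ->
  (forall n, (0 < n)%N ->
     alpha n * CR N X (firstpts x n) <= mindist N (firstpts x n) (x n)) ->
  forall n, (2 <= n)%N ->
  (exists p : 'I_n -> 'rV[R]_d, design X p) ->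
  [/\ CR N X (firstpts x n) <= 2 / a * CRstar N X n,
      SR N (firstpts x n) >= a / 2 * SRstar N X n
    & MR N X (firstpts x n) <= 2 / a].
Proof.
move=> Xc normN /andP[a_gt0 _] alpha_a xX alpha_greedy [//|m].
rewrite ltnS => m_gt0 [Y0 Y0_design].
have Xb := compact_is_norm_bounded normN Xc.
have greedy k : (0 < k)%N ->
    a * CR N X (firstpts x k) <= mindist N (firstpts x k) (x k).
  move=> k_gt0; apply: le_trans (alpha_greedy k k_gt0); apply: ler_wpM2r.
    exact: CR_ge0.
  by case/andP: (alpha_a k k_gt0).
have SR_greedy := greedy_SR_ge normN Xb (ltW a_gt0) greedy m_gt0.
have CR_greedy := greedy_CR_le x normN Xb m_gt0 (leqnSn m).
have a2_ge0 : 0 <= a / 2 by rewrite divr_ge0 // ltW.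
split.
- apply: ler_halfM_inv => //; apply: lb_le_inf; first by exists (CR N X Y0), Y0.
  move=> _ [Y _ <-].
  by have := greedy_CR_le_design normN Xb (ltW a_gt0) xX greedy Y ord0; lra.
- apply: le_trans SR_greedy; apply: ler_wpM2l => //.
  apply: ge_sup; first by exists (SR N Y0), Y0.
  move=> _ [Y Y_design <-].
  exact: (SR_design_le_CR normN Xb (firstpts x m) (Ordinal m_gt0) Y_design).
- rewrite /MR; have [-> | SR_neq0] := eqVneq (SR N (firstpts x m.+1)) 0.
    by rewrite invr0 mulr0 divr_ge0 // ltW.
  have SR_gt0 : 0 < SR N (firstpts x m.+1).
    by rewrite lt_neqAle eq_sym SR_neq0 (le_trans _ SR_greedy) // mulr_ge0 // CR_ge0.
  rewrite ler_pdivrMr //; apply: le_trans CR_greedy _.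
  exact: ler_halfM_inv.
Qed.
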